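(* For any adversary $\mathsf{A}$ against the IND-CPA security of CTRU.PKE, there exist adversaries $\mathsf{B}$ and $\mathsf{C}$ (with the same running time as $\mathsf{A}$) such that $$\mathbf{Adv}^{\text{IND-CPA}}_{\text{CTRU.PKE}}(\mathsf{A})\le\mathbf{Adv}^{\text{NTRU}}_{\mathcal{R}_q,\Psi_1}(\mathsf{B})+\mathbf{Adv}^{\text{RLWE}}_{\mathcal{R}_q,\Psi_2}(\mathsf{C}).$$
   Context: $n$ is a positive integer of the form $3^l2^e$ divisible by $8$; $\mathcal{R}_q=\mathbb{Z}_q[x]/(x^n-x^{n/2}+1)$; $q,q_2$ positive integers with $q_2<q$, $\gcd(q,2)=1$; $\Psi_1,\Psi_2$ distributions over $\mathbb{Z}[x]/(x^n-x^{n/2}+1)$. $\lfloor x\rceil$ is coefficient-wise rounding to the nearest integer. Message space $\mathcal{M}=\{0,1\}^{n/2}$. $\mathrm{PolyEncode}(m)$: with $\mathbf{H}$ the $4\times8$ binary matrix with rows $(1,1,1,1,0,0,0,0)$, $(0,0,1,1,1,1,0,0)$, $(0,0,0,0,1,1,1,1)$, $(0,1,0,1,0,1,0,1)$, split $m$ into quadruples $\mathbf{k}_i=(m_{4i},\dots,m_{4i+3})$ and set coefficients $8i,\dots,8i+7$ to $\frac{q}{2}(\mathbf{k}_i\mathbf{H}\bmod2)$. CTRU.PKE: KeyGen: $f',g\leftarrow\Psi_1$, $f:=2f'+1$; restart if $f$ is not invertible in $\mathcal{R}_q$; $h:=g/f\in\mathcal{R}_q$; $pk=h$, $sk=f$.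 Enc$(h,m)$: $r,e\leftarrow\Psi_2$; $\sigma:=hr+e$; $c:=\lfloor\frac{q_2}{q}(\sigma+\lfloor\mathrm{PolyEncode}(m)\rceil)\rceil\bmod q_2$. (Decryption is irrelevant here.) IND-CPA advantage: $\mathbf{Adv}^{\text{IND-CPA}}_{\text{PKE}}(\mathsf{A})=\big|\Pr[b'=b]-\frac12\big|$ in the experiment $(pk,sk)\leftarrow\mathrm{KeyGen}()$; $(m_0,m_1,s)\leftarrow\mathsf{A}(pk)$; $b\xleftarrow{\$}\{0,1\}$; $c^*\leftarrow\mathrm{Enc}(pk,m_b)$; $b'\leftarrow\mathsf{A}(s,c^* )$. NTRU advantage: $\mathbf{Adv}^{\text{NTRU}}_{\mathcal{R}_q,\Psi_1}(\mathsf{B})=|\Pr[\mathsf{B}(h)=1]-\Pr[\mathsf{B}(u)=1]|$ where $h=g/f$ is distributed as the public key above ($g\leftarrow\Psi_1$, $f=2f'+1$ with $f'\leftarrow\Psi_1$, conditioned on $f$ invertible in $\mathcal{R}_q$) and $u$ is uniform in $\mathcal{R}_q$. RLWE advantage: $\mathbf{Adv}^{\text{RLWE}}_{\mathcal{R}_q,\Psi_2}(\mathsf{C})=|\Pr[\mathsf{C}(h,hr+e)=1]-\Pr[\mathsf{C}(h,u)=1]|$ where $h,u$ are uniform in $\mathcal{R}_q$ and $r,e\leftarrow\Psi_2$. *)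

From HB Require Import structures.
From mathcomp Require Import all_boot all_order all_algebra.
Set Implicit Arguments. Unset Strict Implicit. Unset Printing Implicit Defensive.
Import Order.TTheory GRing.Theory Num.Theory.
Local Open Scope ring_scope.

Definition Phi (q n : nat) : {poly 'Z_q} := 'X^n - 'X^(n %/ 2) + 1.
Notation Rq q n := {poly %/ Phi q n}.

Definition unitq (q n : nat) (f : Rq q n) : bool := [exists y : Rq q n, y * f == 1].
Definition invq (q n : nat) (f : Rq q n) : Rq q n :=
  odflt 0 [pick y : Rq q n | y * f == 1].

Definition msg (n : nat) := {ffun 'I_(n %/ 2) -> bool}.

(* k-th message bit m_k (false if out of range, never used) *)
Definition mbit (n : nat) (m : msg n) (k : nat) : bool :=
  odflt false (omap m (insub k)).

Definition Hmat (a b : nat) : bool :=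
  match a with
  | 0 => (b < 4)%N
  | 1 => (2 <= b < 6)%N
  | 2 => (4 <= b < 8)%N
  | _ => odd b
  end.

(* entry (j mod 8) of k_{j/8} H mod 2, with k_i = (m_{4i},...,m_{4i+3}) *)
Definition encbit (n : nat) (m : msg n) (j : nat) : bool :=
  odd (\sum_(s < 4) (mbit m (4 * (j %/ 8) + s) && Hmat s (j %% 8)))%N.

Definition PolyEncode_coef (q n : nat) (m : msg n) (j : nat) : rat :=
  (q%:R / 2) * (encbit m j)%:R.

Definition round (x : rat) : int := Num.floor (x + 1 / 2).

(* ciphertexts: coefficient vectors with entries in [0, q2) *)
Definition ctxt (n : nat) := {ffun 'I_n -> int}.

(* c := round( q2/q (sigma + round(PolyEncode m)) ) mod q2, where sigma in R_q is
   lifted to its coefficient representative in [0, q) *)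
Definition enc_sigma (q q2 n : nat) (sigma : Rq q n) (m : msg n) : ctxt n :=
  [ffun i : 'I_n =>
     (round ((q2%:R / q%:R) *
        ((nat_of_ord ((val sigma)`_i : 'Z_q))%:R
         + (round (PolyEncode_coef q m i))%:~R)) %% q2%:Z)%Z].

Definition is_distr (R : realFieldType) (T : finType) (p : {ffun T -> R}) : Prop :=
  (forall x, 0 <= p x) /\ \sum_(x : T) p x = 1.

Definition unif (R : realFieldType) (T : finType) : R := (#|T|%:R)^-1.

Section Games.
Variables (R : realFieldType) (q q2 n : nat).
Variables (Psi1 Psi2 : {ffun Rq q n -> R}).

(* KeyGen: f', g <- Psi1, f := 2f'+1, restart unless f invertible; h := g/f.
   Pinv = Pr[2f'+1 invertible]; the output is the conditional distribution. *)
Definition Pinv : R :=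
  \sum_(f' : Rq q n) Psi1 f' * (unitq (2 * f' + 1))%:R.

Definition keygen_pk (f' g : Rq q n) : Rq q n := g * invq (2 * f' + 1).

Definition E_keygen (F : Rq q n -> R) : R :=
  \sum_(f' : Rq q n) \sum_(g : Rq q n)
     (Psi1 f' * Psi1 g * (unitq (2 * f' + 1))%:R / Pinv) * F (keygen_pk f' g).

Variables (S : finType)
  (A1 : Rq q n -> {ffun (msg n * msg n * S) -> R})
  (A2 : S -> ctxt n -> {ffun bool -> R}).

Definition chall (x : msg n * msg n * S) (b : bool) : msg n :=
  if b then x.1.2 else x.1.1.

(* Pr[b' = b | pk = h] in the IND-CPA experiment *)
Definition win_prob (h : Rq q n) : R :=
  \sum_(x : msg n * msg n * S) A1 h x *
    (\sum_(b : bool) 2^-1 *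
       \sum_(r : Rq q n) \sum_(e : Rq q n)
          Psi2 r * Psi2 e * A2 x.2 (enc_sigma q2 (h * r + e) (chall x b)) b).

Definition Adv_INDCPA : R := `| E_keygen win_prob - 2^-1 |.

Definition Adv_NTRU (B : Rq q n -> {ffun bool -> R}) : R :=
  `| E_keygen (fun h => B h true)
     - \sum_(u : Rq q n) unif R (Rq q n) * B u true |.

Definition Adv_RLWE (C : Rq q n -> Rq q n -> {ffun bool -> R}) : R :=
  `| \sum_(h : Rq q n) \sum_(r : Rq q n) \sum_(e : Rq q n)
        unif R (Rq q n) * Psi2 r * Psi2 e * C h (h * r + e) true
     - \sum_(h : Rq q n) \sum_(u : Rq q n)
        unif R (Rq q n) * unif R (Rq q n) * C h u true |.

(* The black-box reductions: each runs A once (plus one encryption-like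
   computation), hence has the running time of A. *)
(* B(h): run the IND-CPA experiment with pk = h, output [b' = b] *)
Definition ntru_reduction (h : Rq q n) : {ffun bool -> R} :=
  [ffun o : bool => if o then win_prob h else 1 - win_prob h].

(* C(h, sigma): run A on pk = h, use sigma in place of hr+e, output [b' = b] *)
Definition rlwe_win (h sigma : Rq q n) : R :=
  \sum_(x : msg n * msg n * S) A1 h x *
    (\sum_(b : bool) 2^-1 * A2 x.2 (enc_sigma q2 sigma (chall x b)) b).

Definition rlwe_reduction (h sigma : Rq q n) : {ffun bool -> R} :=
  [ffun o : bool => if o then rlwe_win h sigma else 1 - rlwe_win h sigma].

End Games.

From HB Require Import structures.
From mathcomp Require Import all_boot all_order all_algebra.
From mathcomp Require Import ring.
Import Order.TTheory GRing.Theory Num.Theory.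
Local Open Scope ring_scope.

(* Hybrid argument.  Replacing the public key by a uniform [h] changes the
   winning probability by at most the NTRU advantage of the distinguisher
   that runs the game on its input.  With [h] uniform, replacing [hr + e] by
   a uniform [u] changes it by at most the RLWE advantage of the distinguisher
   that uses its second input as [hr + e].  Finally, the ciphertext is the
   compression of [u + Encode(m)], and since [u + Encode(m)] is again uniform
   it carries no information about [m]: the winning probability is 1/2. *)

Definition compress (q q2 : nat) (t : int) : int :=
  (round ((q2%:R / q%:R) * t%:~R) %% q2%:Z)%Z.

Lemma compress_mod (q q2 : nat) (a b : int) : (0 < q)%N ->
  (a = b %[mod q%:Z])%Z -> compress q q2 a = compress q q2 b.
Proof.
move=> q_gt0 /eqP; rewrite eqz_mod_dvd => /dvdzP [j def_ab].
have -> : a = b + j * q%:Z by rewrite -def_ab addrC subrK.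
rewrite /compress /round.
have q_neq0 : (q%:R : rat) != 0 by rewrite pnatr_eq0 -lt0n.
have -> : (q2%:R / q%:R) * (b + j * q%:Z)%:~R + 1 / 2
          = ((q2%:R / q%:R) * b%:~R + 1 / 2) + (j * q2%:Z)%:~R :> rat.
  by rewrite !rmorphD !rmorphM /= -!pmulrn; field.
by rewrite floorDrz ?intr_int // intrKfloor addrC modzMDl.
Qed.

Lemma size_Phi_tail (q n : nat) : (0 < n)%N ->
  (size (- 'X^(n %/ 2) + 1 : {poly 'Z_q})%R < size ('X^n : {poly 'Z_q}))%N.
Proof.
move=> n_gt0; rewrite size_polyXn (leq_ltn_trans (size_polyD _ _)) //.
by rewrite size_polyN size_polyXn size_poly1 gtn_max ltnS ltn_Pdiv.
Qed.

Lemma size_Phi (q n : nat) : (0 < n)%N -> size (Phi q n) = n.+1.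
Proof.
by move=> n_gt0; rewrite /Phi -addrA size_polyDl ?size_Phi_tail // size_polyXn.
Qed.

Lemma Phi_monic (q n : nat) : (0 < n)%N -> Phi q n \is monic.
Proof.
by move=> n_gt0; rewrite /Phi -addrA monicE lead_coefDl ?size_Phi_tail // lead_coefXn.
Qed.

Lemma dim_Rq (q n : nat) : (0 < n)%N -> (size (mk_monic (Phi q n))).-1 = n.
Proof. by move=> n_gt0; rewrite /mk_monic size_Phi // Phi_monic // ltnS n_gt0 size_Phi. Qed.

Section OneTimePad.
Variables (q q2 n : nat).
Hypotheses (q_gt1 : (1 < q)%N) (n_gt0 : (0 < n)%N).

Definition compress_coefs (s : Rq q n) : ctxt n :=
  [ffun i : 'I_n => compress q q2 (nat_of_ord ((val s)`_i : 'Z_q))].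

Definition encodeq (m : msg n) : Rq q n :=
  npolyp _ (\poly_(i < n) ((absz (round (PolyEncode_coef q m i) %% q%:Z)%Z)%:R : 'Z_q)).

Lemma enc_sigma_compress (s : Rq q n) (m : msg n) :
  enc_sigma q2 s m = compress_coefs (s + encodeq m).
Proof.
apply/ffunP => i; rewrite !ffunE.
have -> : (nat_of_ord ((val s)`_i : 'Z_q))%:R + (round (PolyEncode_coef q m i))%:~R
          = ((nat_of_ord ((val s)`_i : 'Z_q))%:Z + round (PolyEncode_coef q m i))%:~R :> rat.
  by rewrite intrD.
apply: compress_mod; first exact: ltnW.
rewrite /= coefD coef_npolyp ifT ?dim_Rq // coef_poly ltn_ord.
set x := (val s)`_i; set k := round _; set a := absz (k %% q%:Z)%Z.
have -> : nat_of_ord (x + a%:R : 'Z_q) = ((x + a) %% q)%N.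
  by rewrite -{1}(natr_Zp x) -natrD val_Zp_nat.
have k_mod_ge0 : (0 <= k %% q%:Z)%Z by rewrite modz_ge0 // eqz_nat -lt0n ltnW.
by rewrite -modz_nat PoszD gez0_abs // modzDmr modz_mod.
Qed.

Lemma sum_enc_sigma (R : nmodType) (G : ctxt n -> R) (m : msg n) :
  \sum_(u : Rq q n) G (enc_sigma q2 u m) = \sum_(u : Rq q n) G (compress_coefs u).
Proof.
under eq_bigr do rewrite enc_sigma_compress.
by rewrite [RHS](reindex_inj (addIr (encodeq m))).
Qed.

End OneTimePad.

Lemma sum_unif {R : realFieldType} {T : finType} (t0 : T) : \sum_(t : T) unif R T = 1.
Proof.
have T_gt0 : (0 < #|T|)%N by apply/card_gt0P; exists t0.
by rewrite sumr_const -mulr_natr mulVf // pnatr_eq0 -lt0n.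
Qed.

Lemma eq_E_keygen (R : realFieldType) (q n : nat) (Psi1 : {ffun Rq q n -> R})
    (F G : Rq q n -> R) :
  F =1 G -> E_keygen Psi1 F = E_keygen Psi1 G.
Proof. by move=> eqFG; apply: eq_bigr => f _; apply: eq_bigr => g _; rewrite eqFG. Qed.

Section Games.
Variables (R : realFieldType) (q q2 n : nat) (Psi2 : {ffun Rq q n -> R}).
Variables (S : finType) (A1 : Rq q n -> {ffun (msg n * msg n * S) -> R})
  (A2 : S -> ctxt n -> {ffun bool -> R}).

Lemma win_prob_rlwe_win (h : Rq q n) :
  win_prob q2 Psi2 A1 A2 h =
  \sum_(r : Rq q n) \sum_(e : Rq q n) Psi2 r * Psi2 e * rlwe_win q2 A1 A2 h (h * r + e).
Proof.
rewrite /win_prob /rlwe_win.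
under [RHS]eq_bigr do under eq_bigr do rewrite mulr_sumr.
under [RHS]eq_bigr do rewrite exchange_big /=.
rewrite exchange_big /=; apply: eq_bigr => x _.
under [RHS]eq_bigr do under eq_bigr do rewrite !mulr_sumr.
under [RHS]eq_bigr do rewrite exchange_big /=.
rewrite [RHS]exchange_big /= mulr_sumr; apply: eq_bigr => b _.
rewrite !mulr_sumr; apply: eq_bigr => r _.
rewrite !mulr_sumr; apply: eq_bigr => e _.
ring.
Qed.

Hypotheses (q_gt1 : (1 < q)%N) (n_gt0 : (0 < n)%N).
Hypotheses (A1_distr : forall h, is_distr (A1 h)) (A2_distr : forall s c, is_distr (A2 s c)).

Lemma rlwe_win_unif (h : Rq q n) :
  \sum_(u : Rq q n) unif R (Rq q n) * rlwe_win q2 A1 A2 h u = 2^-1.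
Proof.
have guess_unif x : \sum_(u : Rq q n) unif R (Rq q n) *
    (\sum_(b : bool) 2^-1 * A2 x.2 (enc_sigma q2 u (chall x b)) b) = 2^-1.
  under eq_bigr do rewrite mulr_sumr.
  rewrite exchange_big /=.
  under eq_bigr => b _ do
    rewrite (sum_enc_sigma q q2 n q_gt1 n_gt0 _
               (fun c => unif R (Rq q n) * (2^-1 * A2 x.2 c b))).
  rewrite exchange_big /=.
  under eq_bigr do rewrite -mulr_sumr -mulr_sumr (proj2 (A2_distr _ _)) mulr1.
  by rewrite -mulr_suml (sum_unif 0) mul1r.
rewrite /rlwe_win; under eq_bigr do rewrite mulr_sumr.
rewrite exchange_big /=.
under eq_bigr do (under eq_bigr do rewrite mulrCA; rewrite -mulr_sumr guess_unif).
by rewrite -mulr_suml (proj2 (A1_distr h)) mul1r.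
Qed.

Variable Psi1 : {ffun Rq q n -> R}.

Lemma Adv_INDCPA_le_reductions :
  Adv_INDCPA q2 Psi1 Psi2 A1 A2 <=
  Adv_NTRU Psi1 (ntru_reduction q2 Psi2 A1 A2) + Adv_RLWE Psi2 (rlwe_reduction q2 A1 A2).
Proof.
set U := unif R (Rq q n); set win := win_prob q2 Psi2 A1 A2.
have ntru_real : E_keygen Psi1 (fun h => ntru_reduction q2 Psi2 A1 A2 h true) =
                 E_keygen Psi1 win.
  by apply: eq_E_keygen => h; rewrite ffunE.
have ntru_unif : \sum_u U * ntru_reduction q2 Psi2 A1 A2 u true = \sum_u U * win u.
  by apply: eq_bigr => u _; rewrite ffunE.
have rlwe_real : \sum_h \sum_r \sum_e U * Psi2 r * Psi2 e *
    rlwe_reduction q2 A1 A2 h (h * r + e) true = \sum_u U * win u.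
  apply: eq_bigr => h _; rewrite /win win_prob_rlwe_win mulr_sumr.
  apply: eq_bigr => r _; rewrite mulr_sumr.
  by apply: eq_bigr => e _; rewrite ffunE -!mulrA.
have rlwe_ideal : \sum_h \sum_u U * U * rlwe_reduction q2 A1 A2 h u true = 2^-1.
  under eq_bigr => h _ do under eq_bigr do rewrite ffunE -mulrA.
  under eq_bigr do rewrite -mulr_sumr rlwe_win_unif.
  by rewrite -mulr_suml (sum_unif 0) mul1r.
rewrite /Adv_NTRU /Adv_RLWE ntru_real ntru_unif rlwe_real rlwe_ideal.
exact: ler_distD.
Qed.

End Games.

Theorem theorem4 (R : realFieldType) (l e q q2 : nat)
  (Psi1 Psi2 : {ffun Rq q (3 ^ l * 2 ^ e)%N -> R})
  (S : finType)
  (A1 : Rq q (3 ^ l * 2 ^ e)%N -> {ffun (msg (3 ^ l * 2 ^ e) * msg (3 ^ l * 2 ^ e) * S) -> R})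
  (A2 : S -> ctxt (3 ^ l * 2 ^ e) -> {ffun bool -> R}) :
  (8 %| 3 ^ l * 2 ^ e)%N ->
  (0 < q2)%N -> (q2 < q)%N -> odd q ->
  is_distr Psi1 -> is_distr Psi2 ->
  0 < Pinv Psi1 ->
  (forall h, is_distr (A1 h)) ->
  (forall s c, is_distr (A2 s c)) ->
  exists (B : Rq q (3 ^ l * 2 ^ e)%N -> {ffun bool -> R})
         (C : Rq q (3 ^ l * 2 ^ e)%N -> Rq q (3 ^ l * 2 ^ e)%N -> {ffun bool -> R}),
    B = ntru_reduction q2 Psi2 A1 A2 /\
    C = rlwe_reduction q2 A1 A2 /\
    Adv_INDCPA q2 Psi1 Psi2 A1 A2 <= Adv_NTRU Psi1 B + Adv_RLWE Psi2 C.
Proof.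
move=> _ q2_gt0 q2_lt_q _ _ _ _ A1_distr A2_distr.
exists (ntru_reduction q2 Psi2 A1 A2), (rlwe_reduction q2 A1 A2); do 2!split => //.
apply: Adv_INDCPA_le_reductions => //; first exact: leq_ltn_trans q2_gt0 q2_lt_q.
by rewrite muln_gt0 !expn_gt0.
Qed.
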